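(* Let $k\ge 3$, $n_1=\cdots=n_k\ge 2$, and let $G,G'\in\mathcal{O}(K_{n_1,\dots,n_k})$. Suppose that $G$ and $G'$ belong to the same one of the following three classes: (Case 1) $G=\Gamma(\text{complete};\ t_i=\mathrm{ss}\text{ for }i\in I,\ t_i=\mathrm{sc}\text{ for }i\notin I)$ for some $I\subseteq[k]$; (Case 2) $G=\Gamma(\text{star toward }j;\ t_j=\mathrm{sc},\ t_i=\mathrm{ss}\text{ for }i\in I,\ t_i=\mathrm{c}\text{ for }i\notin I\cup\{j\})$ for some $j\in[k]$ and $I\subseteq[k]\setminus\{j\}$; (Case 3) the same as Case 2 but with $t_j=\mathrm{c}$; and similarly $G'$ with index set $I'$ (and possibly a different index $j'$). If $|I|=|I'|$, then $G$ and $G'$ are isomorphic.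
   Context: $V=U_1\sqcup\cdots\sqcup U_k$, $|U_i|=n_i$; $K_{n_1,\dots,n_k}$ has edges exactly between different parts. The local complement $c_v(G)$ complements the edges among the neighbours of $v$; $\mathcal{O}(G)$ is the set of graphs on $V$ obtainable from $G$ by finite sequences of local complements. Graph family $\Gamma$: each $i$ gets a type $t_i\in\{\mathrm{c},\mathrm{sc},\mathrm{ss}\}$: $\mathrm{c}$: $U_i$ a clique, $R_i=U_i$; $\mathrm{sc}$: $U_i$ independent, $R_i=U_i$; $\mathrm{ss}$: a center $c_i\in U_i$ adjacent to all other vertices of $U_i$, no other internal edges, $R_i=\{c_i\}$. Central type ''complete'': for all $i\ne l$, all edges between $R_i$ and $R_l$; ''star toward $j$'': for each $i\ne j$ all edges between $R_i$ and $R_j$, and no other edges between different parts. (Every graph in $\mathcal{O}(K_{n_1,\dots,n_k})$ is of one of the three case forms.) *)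

From mathcomp Require Import all_boot fingroup perm.
Set Implicit Arguments. Unset Strict Implicit. Unset Printing Implicit Defensive.

(* Vertices of K_{n,...,n} with k parts: pairs (part index i : 'I_k, position : 'I_n).
   U_i = { x | x.1 = i }.  A graph is a set of ordered pairs (x,y) (the adjacency
   relation); graphs arising here are symmetric and irreflexive. *)
Definition vtx (k n : nat) := ('I_k * 'I_n)%type.
Definition graph (k n : nat) := {set (vtx k n * vtx k n)}.

Section Defs.
Variables k n : nat.
Local Notation V := (vtx k n).
Local Notation G_ := (graph k n).

Definition adj (G : G_) (x y : V) : bool := (x, y) \in G.

Definition Kmulti : G_ := [set p : V * V | p.1.1 != p.2.1].

Definition local_compl (G : G_) (v : V) : G_ :=
  [set p : V * V | if [&& p.1 != p.2, adj G v p.1 & adj G v p.2]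
                   then p \notin G else p \in G].

Inductive lc_orbit (G0 : G_) : G_ -> Prop :=
| orbit_refl : lc_orbit G0 G0
| orbit_step G v : lc_orbit G0 G -> lc_orbit G0 (local_compl G v).

Inductive ptype := Tc | Tsc | Tss.
Inductive ctype := Complete | StarToward of 'I_k.

(* t : type of each part; c : centre c_i (position in U_i), used when t_i = ss *)
Definition inR (t : 'I_k -> ptype) (c : 'I_k -> 'I_n) (x : V) : bool :=
  if t x.1 is Tss then x.2 == c x.1 else true.

Definition internal_edge (t : 'I_k -> ptype) (c : 'I_k -> 'I_n) (x y : V) : bool :=
  (x != y) &&
  match t x.1 with
  | Tc => true
  | Tsc => false
  | Tss => (x.2 == c x.1) || (y.2 == c x.1)
  end.

Definition cross_edge (ct : ctype) (t : 'I_k -> ptype) (c : 'I_k -> 'I_n) (x y : V) : bool :=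
  match ct with
  | Complete => inR t c x && inR t c y
  | StarToward j => [&& (x.1 == j) || (y.1 == j), inR t c x & inR t c y]
  end.

Definition Gamma (ct : ctype) (t : 'I_k -> ptype) (c : 'I_k -> 'I_n) : G_ :=
  [set p : V * V | if p.1.1 == p.2.1 then internal_edge t c p.1 p.2
                   else cross_edge ct t c p.1 p.2].

Definition case1 (G : G_) (I : {set 'I_k}) : Prop :=
  exists c, G = Gamma Complete (fun i => if i \in I then Tss else Tsc) c.

Definition case2 (G : G_) (j : 'I_k) (I : {set 'I_k}) : Prop :=
  j \notin I /\
  exists c, G = Gamma (StarToward j)
                  (fun i => if i == j then Tsc else if i \in I then Tss else Tc) c.

Definition case3 (G : G_) (j : 'I_k) (I : {set 'I_k}) : Prop :=
  j \notin I /\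
  exists c, G = Gamma (StarToward j)
                  (fun i => if i == j then Tc else if i \in I then Tss else Tc) c.

Definition isomorphic (G G' : G_) : Prop :=
  exists f : {perm V}, forall x y : V, adj G x y = adj G' (f x) (f y).

End Defs.

From mathcomp Require Import all_boot fingroup perm.
Set Implicit Arguments. Unset Strict Implicit. Unset Printing Implicit Defensive.

(* Up to isomorphism, Gamma only sees which parts carry which internal type
   and, for a star, which part is the centre.  If s permutes the parts so that
   I goes onto I' (and j to j'), then moving part i to part s i while swapping
   the centre c i with the new centre c' (s i) is an isomorphism; such an s
   exists as soon as |I| = |I'|. *)

Section PermImset.
Variable T : finType.
Implicit Types (A B : {set T}) (s : {perm T}).

Lemma imset_tperm_id (u v : T) A : u \notin A -> v \notin A -> tperm u v @: A = A.
Proof.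
move=> uA vA; rewrite -[RHS]imset_id; apply: eq_in_imset => x xA.
by rewrite tpermD //; [move: uA | move: vA]; apply: contraNneq => ->.
Qed.

Lemma perm_imset_point s A B a b : s @: A = B -> a \notin A -> b \notin B ->
  exists t : {perm T}, t a = b /\ t @: A = B.
Proof.
move=> sAB aA bB; exists (s * tperm (s a) b)%g; split; first by rewrite permM tpermL.
have saB : s a \notin B by rewrite -sAB (mem_imset _ _ perm_inj).
rewrite -[RHS](imset_tperm_id saB bB) -sAB -imset_comp.
by apply: eq_imset => x; rewrite permM.
Qed.

Lemma perm_imset_card A B : #|A| = #|B| -> exists s, s @: A = B.
Proof.
move=> AB; have [m cardA cardB] : exists2 m, #|A| = m & #|B| = m by exists #|A|.
elim: m A B cardA cardB {AB} => [|m IH] A B cardA cardB.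
  by exists 1%g; rewrite (cards0_eq cardA) (cards0_eq cardB) imset0.
have [a Aa] : exists a, a \in A by apply/card_gt0P; rewrite cardA.
have [b Bb] : exists b, b \in B by apply/card_gt0P; rewrite cardB.
have cardD1 (C : {set T}) c : c \in C -> #|C| = m.+1 -> #|C :\ c| = m.
  by move=> Cc; rewrite (cardsD1 c) Cc => -[].
have [s sAB] := IH _ (B :\ b) (cardD1 _ _ Aa cardA) (cardD1 _ _ Bb cardB).
have [t [tab tAB]] := perm_imset_point sAB (negbT (setD11 a A)) (negbT (setD11 b B)).
by exists t; rewrite -(setD1K Aa) imsetU1 tab tAB setD1K.
Qed.

Lemma perm_imset_card_point A B a b : a \notin A -> b \notin B -> #|A| = #|B| ->
  exists s, s a = b /\ s @: A = B.
Proof.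
by move=> aA bB /perm_imset_card [s sAB]; apply: perm_imset_point sAB aA bB.
Qed.

End PermImset.

Lemma tperm_eqR (T : finType) (a b x : T) : (tperm a b x == b) = (x == a).
Proof. by rewrite -{2}(tpermL a b) (inj_eq perm_inj). Qed.

Section Relabel.
Variables (k n : nat) (s : {perm 'I_k}) (t t' : 'I_k -> ptype) (c c' : 'I_k -> 'I_n).
Hypothesis t_relabel : forall i, t' (s i) = t i.

Definition relabel_vtx (x : vtx k n) : vtx k n :=
  (s x.1, tperm (c x.1) (c' (s x.1)) x.2).

Definition relabel_ctype (ct : ctype k) : ctype k :=
  if ct is StarToward j then StarToward (s j) else @Complete k.

Lemma relabel_vtx_inj : injective relabel_vtx.
Proof. by move=> [i p] [i' q] [/perm_inj <-] /perm_inj ->. Qed.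

Lemma inR_relabel x : inR t' c' (relabel_vtx x) = inR t c x.
Proof. by rewrite /inR /= t_relabel; case: (t x.1); rewrite ?tperm_eqR. Qed.

Lemma internal_edge_relabel x y : x.1 = y.1 ->
  internal_edge t' c' (relabel_vtx x) (relabel_vtx y) = internal_edge t c x y.
Proof.
move=> xy; rewrite /internal_edge (inj_eq relabel_vtx_inj) /= t_relabel xy.
by case: (t y.1); rewrite ?tperm_eqR.
Qed.

Lemma cross_edge_relabel ct x y :
  cross_edge (relabel_ctype ct) t' c' (relabel_vtx x) (relabel_vtx y)
  = cross_edge ct t c x y.
Proof. by case: ct => [|j] /=; rewrite ?(inj_eq perm_inj) !inR_relabel. Qed.

Lemma Gamma_relabel_iso ct :
  isomorphic (Gamma ct t c) (Gamma (relabel_ctype ct) t' c').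
Proof.
exists (perm relabel_vtx_inj) => x y; rewrite /adj !inE !permE /= (inj_eq perm_inj).
by case: eqP => [xy|_]; rewrite ?internal_edge_relabel ?cross_edge_relabel.
Qed.

End Relabel.

Theorem lemma7 (k n : nat) (G G' : graph k n) :
  3 <= k -> 2 <= n ->
  lc_orbit (@Kmulti k n) G -> lc_orbit (@Kmulti k n) G' ->
  (forall I I' : {set 'I_k},
      case1 G I -> case1 G' I' -> #|I| = #|I'| -> isomorphic G G') /\
  (forall (j j' : 'I_k) (I I' : {set 'I_k}),
      case2 G j I -> case2 G' j' I' -> #|I| = #|I'| -> isomorphic G G') /\
  (forall (j j' : 'I_k) (I I' : {set 'I_k}),
      case3 G j I -> case3 G' j' I' -> #|I| = #|I'| -> isomorphic G G').
Proof.
move=> _ _ _ _; split; [|split].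
- move=> I I' [c ->] [c' ->] /perm_imset_card [s <-].
  apply: (Gamma_relabel_iso (s := s) c c' _ (Complete k)) => i.
  by rewrite (mem_imset _ _ perm_inj).
- move=> j j' I I' [jI [c ->]] [jI' [c' ->]] /(perm_imset_card_point jI jI') [s [<- <-]].
  apply: (Gamma_relabel_iso (s := s) c c' _ (StarToward j)) => i.
  by rewrite (inj_eq perm_inj) (mem_imset _ _ perm_inj).
- move=> j j' I I' [jI [c ->]] [jI' [c' ->]] /(perm_imset_card_point jI jI') [s [<- <-]].
  apply: (Gamma_relabel_iso (s := s) c c' _ (StarToward j)) => i.
  by rewrite (inj_eq perm_inj) (mem_imset _ _ perm_inj).
Qed.
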